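(* Let $X,Y$ be finite sets. (1) For filtrations $F_X,F_Y$ over $X,Y$, $d_{\mathrm{B}}(\mathbf{mgm}(F_X),\mathbf{mgm}(F_Y))\leq d_{\mathrm{T}}(F_X,F_Y)$. (2) For phylogenetic networks $N_X,N_Y$ over $X,Y$ with Vietoris–Rips filtrations $\mathbf{VR}_X,\mathbf{VR}_Y$, $d_{\mathrm{B}}(\mathbf{mgm}(\mathbf{VR}_X),\mathbf{mgm}(\mathbf{VR}_Y))\leq d_{\mathrm{GH}}((X,N_X),(Y,N_Y))$.
   Context: Filtration over $X$: order-preserving $F_X$ from nonempty subsets of $X$ (under inclusion) to $\mathbb{R}$. Mergegram $\mathbf{mgm}(F_X)$: multiset of the nonempty intervals $I_\sigma=[F_X(\sigma),\min_{\sigma\subsetneq\tau\subset X}F_X(\tau))$ ($\min\emptyset=\infty$), one per nonempty $\sigma\subset X$. Bottleneck distance $d_{\mathrm{B}}$ between multisets of intervals $[a,b)$ ($b\in\mathbb{R}\cup\{\infty\}$): infimum of $\varepsilon$ admitting a partial bijection with matched endpoints differing by at most $\varepsilon$ in each coordinate ($|\infty-\infty|=0$) and unmatched intervals of length at most $2\varepsilon$. Pullback along a surjection $\varphi:Z\twoheadrightarrow X$: $\varphi^*F_X(\kappa)=F_X(\varphi(\kappa))$. Tripod distance: $d_{\mathrm{T}}(F_X,F_Y):=\inf\max_{\emptyset\neq\kappa\subset Z}|\varphi_X^*F_X(\kappa)-\varphi_Y^*F_Y(\kappa)|$ over finite sets $Z$ and surjections $\varphi_X:Z\twoheadrightarrow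 X$, $\varphi_Y:Z\twoheadrightarrow Y$. A phylogenetic network over $X$ is $N_X:X\times X\to\mathbb{R}$, symmetric, with $\max\{N_X(x,x),N_X(x',x')\}\leq N_X(x,x')$; $\mathbf{VR}_X(\sigma):=\max_{x,x'\in\sigma}N_X(x,x')$. $d_{\mathrm{GH}}((X,N_X),(Y,N_Y)):=\inf\max_{z,z'\in Z}|N_X(\varphi_X(z),\varphi_X(z'))-N_Y(\varphi_Y(z),\varphi_Y(z'))|$ over the same tripods. *)

From HB Require Import structures.
From mathcomp Require Import all_boot all_order all_algebra.
From mathcomp Require Import boolp classical_sets reals constructive_ereal ereal.
Set Implicit Arguments. Unset Strict Implicit. Unset Printing Implicit Defensive.
Import Order.TTheory GRing.Theory Num.Theory.
Local Open Scope classical_set_scope.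
Local Open Scope ring_scope.

Section Defs.
Variable R : realType.

(* A filtration over X: order-preserving map from nonempty subsets to R
   (its value on the empty set is irrelevant and unconstrained). *)
Definition filtration (X : finType) (F : {set X} -> R) : Prop :=
  forall s t : {set X}, s != finset.set0 -> s \subset t -> F s <= F t.

(* death time: min over strict supersets, min of empty = +oo *)
Definition death (X : finType) (F : {set X} -> R) (s : {set X}) : \bar R :=
  ereal_inf [set (F t)%:E | t in [set t : {set X} | s \proper t]].

(* intervals [a, b) with a : R and b : \bar R (b = +oo for infinity) *)
Definition interval := (R * \bar R)%type.

(* mergegram: multiset (as a sequence) of the nonempty intervals I_s,
   one per nonempty subset s *)
Definition mgm (X : finType) (F : {set X} -> R) : seq interval :=
  [seq (F s, death F s) |
     s <- enum (finset.finset (fun s : {set X} => (s != finset.set0) && ((F s)%:E < death F s)%E))].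

(* endpoint closeness with the convention |oo - oo| = 0 *)
Definition death_close (d d' : \bar R) (e : R) : Prop :=
  match d, d' with
  | EFin r, EFin r' => `|r - r'| <= e
  | +oo%E, +oo%E => 0 <= e
  | _, _ => False
  end.

Definition short_interval (I : interval) (e : R) : Prop :=
  (I.2 - (I.1)%:E <= (2 * e)%:E)%E.

(* e-matching between multisets s and t: partial bijection f between
   positions of s and positions of t *)
Definition eps_matching (s t : seq interval) (e : R) : Prop :=
  exists f : 'I_(size s) -> option 'I_(size t),
    (forall i i' j, f i = Some j -> f i' = Some j -> i = i') /\
    (forall i j, f i = Some j ->
        `|(tnth (in_tuple s) i).1 - (tnth (in_tuple t) j).1| <= e /\
        death_close (tnth (in_tuple s) i).2 (tnth (in_tuple t) j).2 e) /\
    (forall i, f i = None -> short_interval (tnth (in_tuple s) i) e) /\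
    (forall j, (forall i, f i <> Some j) -> short_interval (tnth (in_tuple t) j) e).

Definition bottleneck (s t : seq interval) : \bar R :=
  ereal_inf [set e%:E | e in [set e : R | 0 <= e /\ eps_matching s t e]].

Definition surj (A B : Type) (f : A -> B) : Prop := forall b, exists a, f a = b.

Definition pullback (Z X : finType) (phi : Z -> X) (F : {set X} -> R) :
  {set Z} -> R := fun k => F (phi @: k).

(* distortion of a tripod for filtrations; max over the empty set is 0 *)
Definition filt_distortion (Z X Y : finType) (pX : Z -> X) (pY : Z -> Y)
  (F : {set X} -> R) (G : {set Y} -> R) : R :=
  \big[Num.max/0]_(k : {set Z} | k != finset.set0)
     `|pullback pX F k - pullback pY G k|.

Definition tripod_dist (X Y : finType) (F : {set X} -> R) (G : {set Y} -> R)
  : \bar R :=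
  ereal_inf [set v%:E | v in [set v : R | exists (Z : finType)
     (pX : Z -> X) (pY : Z -> Y),
     surj pX /\ surj pY /\ v = filt_distortion pX pY F G]].

Definition phylo (X : finType) (N : X -> X -> R) : Prop :=
  (forall x x', N x x' = N x' x) /\
  (forall x x', Num.max (N x x) (N x' x') <= N x x').

(* Vietoris-Rips filtration: max of N over pairs in s (0 on the empty set,
   a value that is never used) *)
Definition VR (X : finType) (N : X -> X -> R) (s : {set X}) : R :=
  match [pick x in s] with
  | Some x0 => \big[Num.max/N x0 x0]_(p in finset.setX s s) N p.1 p.2
  | None => 0
  end.

Definition net_distortion (Z X Y : finType) (pX : Z -> X) (pY : Z -> Y)
  (N : X -> X -> R) (M : Y -> Y -> R) : R :=
  \big[Num.max/0]_(p : Z * Z) `|N (pX p.1) (pX p.2) - M (pY p.1) (pY p.2)|.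

Definition gh_dist (X Y : finType) (N : X -> X -> R) (M : Y -> Y -> R)
  : \bar R :=
  ereal_inf [set v%:E | v in [set v : R | exists (Z : finType)
     (pX : Z -> X) (pY : Z -> Y),
     surj pX /\ surj pY /\ v = net_distortion pX pY N M]].

End Defs.

From Pilot Require Import Defs.
From HB Require Import structures.
From mathcomp Require Import all_boot all_order all_algebra.
From mathcomp Require Import boolp classical_sets reals constructive_ereal ereal.
From mathcomp Require Import lra.
Set Implicit Arguments. Unset Strict Implicit. Unset Printing Implicit Defensive.
Import Order.TTheory GRing.Theory Num.Theory.
Local Open Scope ring_scope.

(* Fix a tripod X <<- Z ->> Y with distortion v.  Pulling a filtration back
   along a surjection f : Z ->> X does not change its mergegram up to
   reindexing: the bar of s in X is the bar of f^-1(s) in Z, and every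
   other nonempty subset of Z carries an empty interval (its death is at
   most its birth).  So both mergegrams are indexed by subsets of the common
   set Z, and the identity on common indices is a v-matching: matched bars
   have births and deaths within v (deaths are minima over the same strict
   supersets), and a bar present on one side only is short because it dies
   in the other filtration.  Taking the infimum over tripods gives (1).
   For (2), the filtration distortion of VR_X, VR_Y along a tripod is at
   most its network distortion, since each Vietoris-Rips value is a maximum
   of network values over pairs of points of Z. *)

Section Mergegram.
Variable R : realType.

Definition alive (X : finType) (F : {set X} -> R) : {set {set X}} :=
  finset.finset (fun s : {set X} =>
    (s != finset.set0) && ((F s)%:E < death F s)%E).

Lemma mgmE (X : finType) (F : {set X} -> R) :
  mgm F = [seq (F s, death F s) | s : {set X} <- enum (alive F)].
Proof. by []. Qed.

Lemma proper_neq0 (Z : finType) (k t : {set Z}) :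
  k \proper t -> t != finset.set0.
Proof. by move=> /properP [_ [x xt _]]; apply/set0Pn; exists x. Qed.

Lemma setT_notproper (Z : finType) (t : {set Z}) : ~~ ([set: Z] \proper t).
Proof. by apply/negP => /properP [_ [x _]]; rewrite inE. Qed.

Lemma death_cases (X : finType) (F : {set X} -> R) (s : {set X}) :
  (s = [set: X] /\ death F s = +oo%E) \/
  (exists t : {set X}, [/\ s \proper t, death F s = (F t)%:E &
     forall t' : {set X}, s \proper t' -> F t <= F t']).
Proof.
have [->|ns] := eqVneq s [set: X].
  left; split => //; apply/eqP; rewrite eq_le leey /=.
  by apply/ereal_infP => y [t /= + _]; rewrite (negbTE (setT_notproper _)).
right; have Ps : s \proper [set: X] by rewrite properT.
case: (@arg_minP _ _ _ [set: X] (fun t => s \proper t) F Ps) => t st tmin.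
exists t; split => //; apply/le_anti/andP; split.
  by apply: ge_ereal_inf; exists (F t)%:E => //; exists t.
by apply/ereal_infP => y [t' /= st' <-]; rewrite lee_fin; apply: tmin.
Qed.

Lemma death_le (X : finType) (F : {set X} -> R) (s t : {set X}) :
  s \proper t -> (death F s <= (F t)%:E)%E.
Proof. by move=> st; apply: ereal_inf_lbound; exists t. Qed.

Lemma eps_matching_keyed (T : eqType) (x0 : T) (sA sB : seq T)
    (hA hB : T -> Defs.interval R) (e : R) :
  uniq sA -> uniq sB ->
  (forall x, x \in sA -> x \in sB ->
     `|(hA x).1 - (hB x).1| <= e /\ death_close (hA x).2 (hB x).2 e) ->
  (forall x, x \in sA -> x \notin sB -> short_interval (hA x) e) ->
  (forall x, x \in sB -> x \notin sA -> short_interval (hB x) e) ->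
  eps_matching (map hA sA) (map hB sB) e.
Proof.
move=> uA uB common onlyA onlyB.
have tnthE (h : T -> Defs.interval R) s (i : 'I_(size (map h s))) :
    tnth (in_tuple (map h s)) i = h (nth x0 s i).
  by rewrite (tnth_nth (h x0)) /= (nth_map x0) // -(size_map h).
have szB (j : 'I_(size (map hB sB))) : (j < size sB)%N by rewrite -(size_map hB).
exists (fun i => insub (index (nth x0 sA i) sB)); split; [|split; [|split]].
- move=> i i' j; case: insubP => // k ik ek [<-].
  case: insubP => // k' ik' ek' [ekk]; apply: val_inj => /=.
  have iB : nth x0 sA i \in sB by rewrite -index_mem -(size_map hB).
  have i'B : nth x0 sA i' \in sB by rewrite -index_mem -(size_map hB).
  have same : nth x0 sA i = nth x0 sA i'.
    by rewrite -(nth_index x0 iB) -(nth_index x0 i'B) -ek -ek' ekk.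
  have szA (l : 'I_(size (map hA sA))) : (l < size sA)%N by rewrite -(size_map hA).
  by apply/eqP; rewrite -(nth_uniq x0 (szA i) (szA i') uA) same.
- move=> i j; case: insubP => // k ki ek [<-].
  have iB : nth x0 sA i \in sB by rewrite -index_mem -(size_map hB).
  rewrite !tnthE ek nth_index //; apply: common iB.
  by apply: mem_nth; rewrite -(size_map hA).
- move=> i; case: insubP => // ki _; rewrite tnthE; apply: onlyA.
    by apply: mem_nth; rewrite -(size_map hA).
  by rewrite -index_mem -(size_map hB).
- move=> j nj; rewrite tnthE; apply: onlyB; first exact: mem_nth.
  apply/negP => jA.
  have iA : (index (nth x0 sB j) sA < size (map hA sA))%N.
    by rewrite (size_map hA) index_mem.
  apply: (nj (Ordinal iA)); rewrite /= nth_index // index_uniq //.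
  by case: insubP => [k _ ek|]; [congr Some; apply: val_inj | rewrite ltn_ord].
Qed.

Section CommonDomain.
Variables (Z : finType) (P Q : {set Z} -> R) (v : R).
Hypothesis PQ_close : forall k, k != finset.set0 -> `|P k - Q k| <= v.

Lemma close_bounds k : k != finset.set0 -> P k <= Q k + v /\ Q k <= P k + v.
Proof. by move=> nk; move: (PQ_close nk); rewrite ler_norml => /andP[]; lra. Qed.

(* Deaths are minima over the same strict supersets, hence v-close. *)
Lemma death_close_common (hv : 0 <= v) k :
  death_close (death P k) (death Q k) v.
Proof.
case: (death_cases P k) => [[kT dP] | [t1 [p1 dP m1]]];
case: (death_cases Q k) => [[kT' dQ] | [t2 [p2 dQ m2]]].
- by rewrite dP dQ.
- by move: p2; rewrite kT (negbTE (setT_notproper _)).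
- by move: p1; rewrite kT' (negbTE (setT_notproper _)).
rewrite dP dQ /=.
have [a1 a2] := close_bounds (proper_neq0 p1).
have [b1 b2] := close_bounds (proper_neq0 p2).
have c1 := m1 _ p2; have c2 := m2 _ p1.
by rewrite ler_norml; apply/andP; split; lra.
Qed.

Lemma short_if_dead_other k : k != finset.set0 ->
  (death Q k <= (Q k)%:E)%E -> short_interval (P k, death P k) v.
Proof.
move=> nk; case: (death_cases Q k) => [[_ -> //] | [t2 [p2 -> _]]].
rewrite lee_fin => dead.
case: (death_cases P k) => [[kT _] | [t1 [p1 dP m1]]].
  by move: p2; rewrite kT (negbTE (setT_notproper _)).
rewrite /short_interval /= dP -EFinD lee_fin.
have [a1 a2] := close_bounds nk.
have [b1 b2] := close_bounds (proper_neq0 p2).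
have c1 := m1 _ p2; lra.
Qed.
End CommonDomain.

Section Pullback.
Variables (Z X : finType) (f : Z -> X).
Hypothesis f_surj : surj f.

(* Along a surjection, taking preimages is a section of taking images, so
   it is injective and preserves nonemptiness. *)
Lemma imset_preimset (s : {set X}) : f @: (f @^-1: s) = s.
Proof.
apply/setP => y; apply/imsetP/idP => [[z + ->]|ys]; first by rewrite inE.
by have [z fz] := f_surj y; exists z; rewrite ?inE fz.
Qed.

Lemma preimset_inj : injective (fun s : {set X} => f @^-1: s).
Proof. by move=> s1 s2 /= e; rewrite -(imset_preimset s1) e imset_preimset. Qed.

Lemma preimset_neq0 (s : {set X}) :
  s != finset.set0 -> f @^-1: s != finset.set0.
Proof.
move=> /set0Pn [y ys]; have [z fz] := f_surj y.
by apply/set0Pn; exists z; rewrite inE fz.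
Qed.

(* Pulling back preserves death times: a strict superset t of s gives the
   strict superset f^-1(t) of f^-1(s) with the same value, and a strict
   superset u of f^-1(s) has image a strict superset of s with the same
   value. *)
Lemma death_pullback (F : {set X} -> R) (s : {set X}) :
  death F s = death (pullback f F) (f @^-1: s).
Proof.
have codomT (t : {set X}) : t \subset codom f.
  by apply/fintype.subsetP => y _; have [z <-] := f_surj y; apply: codom_f.
case: (death_cases F s) => [[sT dF] | [t1 [p1 dF m1]]];
case: (death_cases (pullback f F) (f @^-1: s)) => [[sT' dP] | [t2 [p2 dP m2]]].
- by rewrite dF dP.
- by move: p2; rewrite sT preimsetT (negbTE (setT_notproper _)).
- have := preimset_proper (codomT t1) p1.
  by rewrite sT' (negbTE (setT_notproper _)).
rewrite dF dP; congr EFin; apply/le_anti/andP; split.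
  apply: m1; move/properP: p2 => [s_t2 [z zt2 zs]].
  rewrite properE -{1}(imset_preimset s) imsetS //=.
  by apply/fintype.subsetPn; exists (f z); [apply: imset_f | rewrite inE in zs].
have := m2 _ (preimset_proper (codomT t1) p1).
by rewrite /pullback imset_preimset.
Qed.

(* A nonempty subset of Z that is not the preimage of a bar-carrying
   subset of X has an empty interval in the pullback: either it is such a
   preimage of a dead set, or it dies at the preimage of its image. *)
Lemma pullback_dead (F : {set X} -> R) (k : {set Z}) :
  k != finset.set0 -> k \notin [seq f @^-1: s | s : {set X} <- enum (alive F)] ->
  (death (pullback f F) k <= (pullback f F k)%:E)%E.
Proof.
move=> nk notin.
have k_sub : k \subset f @^-1: (f @: k).
  by apply/fintype.subsetP => z zk; rewrite inE imset_f.
have [e|ne] := eqVneq k (f @^-1: (f @: k)).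
  have : f @: k \notin alive F.
    by apply: contra notin => m; rewrite e map_f // mem_enum.
  rewrite inE negb_and negbK imset_eq0 (negbTE nk) /= -leNgt => dead.
  by rewrite e -death_pullback /pullback imset_preimset.
have k_proper : k \proper f @^-1: (f @: k) by rewrite finset.properEneq ne k_sub.
by apply: le_trans (death_le _ k_proper) _; rewrite /pullback imset_preimset.
Qed.

Lemma mgm_pullback (F : {set X} -> R) :
  mgm F = [seq (pullback f F k, death (pullback f F) k)
            | k <- [seq f @^-1: s | s : {set X} <- enum (alive F)]].
Proof.
rewrite mgmE -map_comp; apply: eq_map => s /=.
by rewrite /pullback imset_preimset -death_pullback.
Qed.

Lemma pullback_alive_neq0 (F : {set X} -> R) (k : {set Z}) :
  k \in [seq f @^-1: s | s : {set X} <- enum (alive F)] -> k != finset.set0.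
Proof.
by case/mapP => s; rewrite mem_enum inE => /andP [ns _] ->; apply: preimset_neq0.
Qed.
End Pullback.

Lemma matching_of_tripod (X Y Z : finType) (F : {set X} -> R)
    (G : {set Y} -> R) (pX : Z -> X) (pY : Z -> Y) (v : R) :
  surj pX -> surj pY -> 0 <= v ->
  (forall k, k != finset.set0 -> `|pullback pX F k - pullback pY G k| <= v) ->
  eps_matching (mgm F) (mgm G) v.
Proof.
move=> sX sY hv close.
have close' k : k != finset.set0 -> `|pullback pY G k - pullback pX F k| <= v.
  by move=> nk; rewrite distrC; apply: close.
rewrite (mgm_pullback sX) (mgm_pullback sY).
apply: (eps_matching_keyed finset.set0).
- by rewrite map_inj_uniq ?enum_uniq //; apply: preimset_inj.
- by rewrite map_inj_uniq ?enum_uniq //; apply: preimset_inj.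
- move=> k kA _; have nk := pullback_alive_neq0 sX kA.
  by split; [apply: close | apply: death_close_common].
- move=> k kA kB; have nk := pullback_alive_neq0 sX kA.
  by apply: (short_if_dead_other close nk); apply: pullback_dead.
- move=> k kB kA; have nk := pullback_alive_neq0 sY kB.
  by apply: (short_if_dead_other close' nk); apply: pullback_dead.
Qed.

Lemma bottleneck_le_distortion (X Y Z : finType) (F : {set X} -> R)
    (G : {set Y} -> R) (pX : Z -> X) (pY : Z -> Y) :
  surj pX -> surj pY ->
  (bottleneck (mgm F) (mgm G) <= (filt_distortion pX pY F G)%:E)%E.
Proof.
move=> sX sY; apply: ereal_inf_lbound; eexists => //; split.
  exact: bigmax_ge_id.
apply: matching_of_tripod => //; first exact: bigmax_ge_id.
by move=> k nk; apply: (le_bigmax_cond _ (j := k)).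
Qed.

Lemma VR_ub (X : finType) (N : X -> X -> R) (s : {set X}) (x x' : X) :
  x \in s -> x' \in s -> N x x' <= VR N s.
Proof.
move=> xs x's; rewrite /VR; case: pickP => [x0 _ | none]; last first.
  by have := none x; rewrite xs.
by apply: (le_bigmax_cond _ (j := (x, x'))); rewrite finset.in_setX xs x's.
Qed.

Lemma VR_le (X : finType) (N : X -> X -> R) (s : {set X}) (m : R) :
  (forall x x', x \in s -> x' \in s -> N x x' <= m) ->
  s != finset.set0 -> VR N s <= m.
Proof.
move=> bound /set0Pn [x xs]; rewrite /VR; case: pickP => [x0 x0s | none].
  apply: bigmax_le; first exact: bound.
  by move=> [y y'] /=; rewrite finset.in_setX => /andP []; apply: bound.
by have := none x; rewrite xs.
Qed.

Lemma VR_image_le (X Y Z : finType) (N : X -> X -> R) (M : Y -> Y -> R)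
    (pX : Z -> X) (pY : Z -> Y) (v : R) (k : {set Z}) :
  k != finset.set0 ->
  (forall z z', N (pX z) (pX z') <= M (pY z) (pY z') + v) ->
  VR N (pX @: k) <= VR M (pY @: k) + v.
Proof.
move=> nk bound; apply: VR_le; last by rewrite imset_eq0.
move=> _ _ /imsetP [z zk ->] /imsetP [z' z'k ->].
by rewrite (le_trans (bound z z')) // lerD2r VR_ub ?imset_f.
Qed.

Lemma VR_distortion_le (X Y Z : finType) (N : X -> X -> R) (M : Y -> Y -> R)
    (pX : Z -> X) (pY : Z -> Y) :
  filt_distortion pX pY (VR N) (VR M) <= net_distortion pX pY N M.
Proof.
have close z z' :
    `|N (pX z) (pX z') - M (pY z) (pY z')| <= net_distortion pX pY N M.
  exact: (le_bigmax _
    (fun p : Z * Z => `|N (pX p.1) (pX p.2) - M (pY p.1) (pY p.2)|) (z, z')).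
have v_ge0 : 0 <= net_distortion pX pY N M by apply: bigmax_ge_id.
(* Only the two properties above of the network distortion are used. *)
move: (net_distortion pX pY N M) v_ge0 close => v v_ge0 close.
apply: bigmax_le => // k nk.
have [le1 le2] : (forall z z', N (pX z) (pX z') <= M (pY z) (pY z') + v) /\
                 (forall z z', M (pY z) (pY z') <= N (pX z) (pX z') + v).
  by split=> z z'; move: (close z z'); rewrite ler_norml => /andP[]; lra.
have := VR_image_le nk le1; have := VR_image_le nk le2.
by rewrite /pullback ler_norml => h1 h2; apply/andP; split; lra.
Qed.
End Mergegram.

Theorem mainTheorem16 (R : realType) (X Y : finType) :
  (forall (F : {set X} -> R) (G : {set Y} -> R),
     filtration F -> filtration G ->
     (bottleneck (mgm F) (mgm G) <= tripod_dist F G)%E) /\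
  (forall (N : X -> X -> R) (M : Y -> Y -> R),
     phylo N -> phylo M ->
     (bottleneck (mgm (VR N)) (mgm (VR M)) <= gh_dist N M)%E).
Proof.
split.
- move=> F G _ _; apply/ereal_infP => _ [v [Z [pX [pY [sX [sY ->]]]]] <-].
  exact: bottleneck_le_distortion.
- move=> N M _ _; apply/ereal_infP => _ [v [Z [pX [pY [sX [sY ->]]]]] <-].
  apply: le_trans (bottleneck_le_distortion _ _ sX sY) _.
  by rewrite lee_fin VR_distortion_le.
Qed.
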